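(* Let $I\subseteq\mathbb{R}$ be an interval, let $f:I\to\mathbb{R}$ be differentiable on the interior $I^{\circ}$, let $a,b\in I^{\circ}$ with $a<b$, assume $f'\in L[a,b]$, and let $\alpha,\lambda\in[0,1]$. Suppose that $|f'|$ is $s$-convex on $[a,b]$ for some fixed $s\in(0,1]$. Define $$I_f(\lambda,\alpha,a,b)=\lambda\big(\alpha f(a)+(1-\alpha)f(b)\big)+(1-\lambda)f(\alpha a+(1-\alpha)b)-\frac{1}{b-a}\int_a^b f(x)\,dx,$$ $$c_1(\alpha,\lambda,s)=(\alpha\lambda)^{s+2}\frac{2}{(s+1)(s+2)}-\alpha\lambda\frac{(1-\alpha)^{s+1}}{s+1}+\frac{(1-\alpha)^{s+2}}{s+2},$$ $$c_2(\alpha,\lambda,s)=(1-\alpha\lambda)^{s+2}\frac{2}{(s+1)(s+2)}-\frac{(1-\alpha\lambda)(1+\alpha^{s+1})}{s+1}+\frac{1+\alpha^{s+2}}{s+2},$$ $$c_3(\alpha,\lambda,s)=\alpha\lambda\frac{(1-\alpha)^{s+1}}{s+1}-\frac{(1-\alpha)^{s+2}}{s+2},\qquad c_4(\alpha,\lambda,s)=\frac{(\alpha\lambda-1)(1-\alpha^{s+1})}{s+1}+\frac{1-\alpha^{s+2}}{s+2}.$$ Then: (i) if $\alpha\lambda\leq 1-\alpha\leq 1-\lambda(1-\alpha)$, $$|I_f(\lambda,\alpha,a,b)|\leq (b-a)\Big[\big(c_1(\alpha,\lambda,s)+c_2(1-\alpha,\lambda,s)\big)|f'(b)|+\big(c_2(\alpha,\lambda,s)+c_1(1-\alpha,\lambda,s)\big)|f'(a)|\Big];$$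 (ii) if $\alpha\lambda\leq 1-\lambda(1-\alpha)\leq 1-\alpha$, $$|I_f(\lambda,\alpha,a,b)|\leq (b-a)\Big[\big(c_1(\alpha,\lambda,s)+c_4(1-\alpha,\lambda,s)\big)|f'(b)|+\big(c_2(\alpha,\lambda,s)+c_3(1-\alpha,\lambda,s)\big)|f'(a)|\Big];$$ (iii) if $1-\alpha\leq\alpha\lambda\leq 1-\lambda(1-\alpha)$, $$|I_f(\lambda,\alpha,a,b)|\leq (b-a)\Big[\big(c_3(\alpha,\lambda,s)+c_2(1-\alpha,\lambda,s)\big)|f'(b)|+\big(c_4(\alpha,\lambda,s)+c_1(1-\alpha,\lambda,s)\big)|f'(a)|\Big].$$
   Context: For a fixed $s\in(0,1]$, a function $g:[a,b]\to[0,\infty)$ is called $s$-convex (in the second sense) on $[a,b]$ if $g(\theta x+(1-\theta)y)\leq \theta^{s}g(x)+(1-\theta)^{s}g(y)$ for all $x,y\in[a,b]$ and all $\theta\in[0,1]$. *)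

From mathcomp Require Import all_boot all_order all_algebra.
From mathcomp Require Import all_classical all_reals all_analysis.
Set Implicit Arguments. Unset Strict Implicit. Unset Printing Implicit Defensive.
Import Order.TTheory GRing.Theory Num.Theory.
Import numFieldNormedType.Exports.
Local Open Scope classical_set_scope.
Local Open Scope ring_scope.

Definition s_convex (R : realType) (s a b : R) (g : R -> R) : Prop :=
  (forall x, a <= x <= b -> 0 <= g x) /\
  (forall x y t, a <= x <= b -> a <= y <= b -> 0 <= t <= 1 ->
     g (t * x + (1 - t) * y) <= t `^ s * g x + (1 - t) `^ s * g y).

Definition I_f (R : realType) (f : R -> R) (lam alpha a b : R) : R :=
  lam * (alpha * f a + (1 - alpha) * f b) + (1 - lam) * f (alpha * a + (1 - alpha) * b)
  - (b - a)^-1 * (\int[lebesgue_measure]_(x in `[a, b]) f x).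

Definition c1 (R : realType) (alpha lam s : R) : R :=
  (alpha * lam) `^ (s + 2) * (2 / ((s + 1) * (s + 2)))
  - alpha * lam * ((1 - alpha) `^ (s + 1) / (s + 1))
  + (1 - alpha) `^ (s + 2) / (s + 2).

Definition c2 (R : realType) (alpha lam s : R) : R :=
  (1 - alpha * lam) `^ (s + 2) * (2 / ((s + 1) * (s + 2)))
  - (1 - alpha * lam) * (1 + alpha `^ (s + 1)) / (s + 1)
  + (1 + alpha `^ (s + 2)) / (s + 2).

Definition c3 (R : realType) (alpha lam s : R) : R :=
  alpha * lam * ((1 - alpha) `^ (s + 1) / (s + 1))
  - (1 - alpha) `^ (s + 2) / (s + 2).

Definition c4 (R : realType) (alpha lam s : R) : R :=
  (alpha * lam - 1) * (1 - alpha `^ (s + 1)) / (s + 1)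
  + (1 - alpha `^ (s + 2)) / (s + 2).

From mathcomp Require Import all_boot all_order all_algebra.
From mathcomp Require Import all_classical all_reals all_analysis.
From mathcomp Require Import lra ring.
Import Order.TTheory GRing.Theory Num.Theory.
Import numFieldNormedType.Exports.
Local Open Scope classical_set_scope.
Local Open Scope ring_scope.

(* Let K_w(z) = (z - w) f(z) - \int_a^z f ([kprim w]), so that K_w'(z) = (z - w) f'(z).
   With the nodes u1 = a + alpha lam (b - a), c = alpha a + (1 - alpha) b and
   u2 = b - lam (1 - alpha) (b - a) one has (b - a) I_f = [K_u1]_a^c + [K_u2]_c^b.
   Writing z = t a + (1 - t) b, s-convexity gives |f'(z)| <= |f'(a)| t^s + |f'(b)| (1 - t)^s,
   so by the mean value theorem every increment of K_w over an interval lying on one side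
   of w is dominated by the increment of an explicit primitive ([majorant w]) of
   |z - w| (|f'(a)| t^s + |f'(b)| (1 - t)^s).  Evaluating these primitives at the nodes
   produces c1, ..., c4; the three cases are the three possible orders of u1, c, u2. *)

Section derivative_comparison.
Context {R : realType}.
Implicit Types (u v : R) (F P H dF dP dH : R -> R).

Lemma ler_derive_ge0 H dH u v : u <= v ->
  (forall x, u < x < v -> is_derive x 1 H (dH x)) ->
  (forall x, u < x < v -> 0 <= dH x) ->
  {within `[u, v], continuous H} -> H u <= H v.
Proof.
rewrite le_eqVlt => /predU1P[->//|uv] dH' dH0 cH.
have [c] : exists2 c, c \in `]u, v[ & H v - H u = dH c * (v - u).
  by apply: MVT => // x; rewrite in_itv/=; exact: dH'.
rewrite in_itv/= => /dH0 dHc0 eq.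
by rewrite -subr_ge0 eq mulr_ge0// subr_ge0 ltW.
Qed.

(* Both [P - F] and [P + F] are nondecreasing. *)
Lemma ler_normB_derive {F P dF dP u v} : u <= v ->
  (forall x, u < x < v -> is_derive x 1 F (dF x)) ->
  (forall x, u < x < v -> is_derive x 1 P (dP x)) ->
  (forall x, u < x < v -> `|dF x| <= dP x) ->
  {within `[u, v], continuous F} -> {within `[u, v], continuous P} ->
  `|F v - F u| <= P v - P u.
Proof.
move=> uv dF' dP' dFP cF cP.
have : (P - F) u <= (P - F) v.
  apply: (@ler_derive_ge0 _ (dP - dF)) => // [x ux|x ux|].
  - exact: is_deriveB (dP' x ux) (dF' x ux).
  - by rewrite !fctE subr_ge0 (le_trans (ler_norm _)) ?dFP.
  - exact: within_continuousB.
have : (P + F) u <= (P + F) v.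
  apply: (@ler_derive_ge0 _ (dP + dF)) => // [x ux|x ux|].
  - exact: is_deriveD (dP' x ux) (dF' x ux).
  - by rewrite !fctE -lerBlDr sub0r (le_trans _ (dFP x ux))// -normrN ler_norm.
  - exact: within_continuousD.
rewrite !fctE ler_norml => *; apply/andP; split; lra.
Qed.

End derivative_comparison.

Lemma continuous_normr_powR (R : realType) (r : R) : 0 < r ->
  continuous (fun t : R => `|t| `^ r).
Proof.
move=> r0 x; have [->|x0] := eqVneq x 0.
  rewrite /continuous_at normr0 powR0 ?gt_eqF//; apply/cvgrPdist_lt => e e0.
  have er0 : 0 < e `^ r^-1 by apply: powR_gt0.
  near=> t; rewrite sub0r normrN ger0_norm ?powR_ge0//.
  have te : `|t| < e `^ r^-1.
    by near: t; exists (e `^ r^-1) => // y /=; rewrite sub0r normrN.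
  have -> : e = (e `^ r^-1) `^ r by rewrite -powRrM mulVf ?gt_eqF// powRr1 ?ltW.
  by rewrite gt0_ltr_powR ?nnegrE ?powR_ge0.
rewrite /continuous_at -[X in X @ _]/((@powR R ^~ r) \o Num.norm).
apply: cvg_comp; first exact: (cvg_norm (@cvg_id _ _)).
apply: (@differentiable_continuous _ R^o R^o `|x| (@powR R ^~ r)).
apply/derivable1_diffP.
by apply: derivable_powR; rewrite in_itv/= andbT normr_gt0.
Unshelve. all: by end_near. Qed.

Lemma powRS (R : realType) (t r : R) : 0 <= t -> 0 <= r ->
  t `^ (r + 1) = t * t `^ r.
Proof.
by move=> t0 r0; rewrite powRD ?powRr1 1?mulrC// gt_eqF// ltr_wpDl.
Qed.

Section power_primitive.
Context {R : realType}.
Variable s : R.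
Hypothesis s_gt0 : 0 < s.

(* [|t|] rather than [t] because [powR] is junk ([= 1]) on negative reals: this makes
   [powprim p] continuous everywhere. *)
Definition powprim (p t : R) :=
  `|t| `^ (s + 2) / (s + 2) - p * `|t| `^ (s + 1) / (s + 1).

Lemma powR_add2 (t : R) : 0 <= t -> t `^ (s + 2) = t * t `^ (s + 1).
Proof.
move=> t0; rewrite -powRS// ?addr_ge0 ?ltW//.
by congr (_ `^ _); ring.
Qed.

Lemma powprimE (p t : R) : 0 <= t ->
  powprim p t = t `^ (s + 2) / (s + 2) - p * t `^ (s + 1) / (s + 1).
Proof. by move=> t0; rewrite /powprim ger0_norm. Qed.

Lemma is_derive_powprim (p t : R) : 0 < t ->
  is_derive t 1 (powprim p) ((t - p) * t `^ s).
Proof.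
move=> t0.
pose g y := y `^ (s + 2) / (s + 2) - p * y `^ (s + 1) / (s + 1).
apply: (@near_eq_is_derive _ _ _ g).
  near=> y; rewrite powprimE//; apply: ltW; near: y; exact: lt_nbhsr.
have -> : g = (s + 2)^-1 *: @powR R ^~ (s + 2) - (p / (s + 1)) *: @powR R ^~ (s + 1).
  by apply/funext => y; rewrite /g !fctE /= /GRing.scale /=; ring.
have := is_deriveB (is_deriveZ (s + 2)^-1 (is_derive1_powR (s + 2) t0))
  (is_deriveZ (p / (s + 1)) (is_derive1_powR (s + 1) t0)).
move/is_derive_eq; apply.
rewrite /GRing.scale /= !addrK (_ : s + 2 - 1 = s + 1); last by ring.
rewrite powRS ?ltW//; field.
by rewrite !gt_eqF ?addr_gt0.
Unshelve. all: by end_near. Qed.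

Lemma continuous_powprim (p : R) : continuous (powprim p).
Proof.
have pow_cont r : 0 <= r -> continuous (fun t : R => `|t| `^ (s + r)).
  by move=> r0; apply: continuous_normr_powR; rewrite (lt_le_trans s_gt0) ?lerDl.
move=> x; apply: cvgB; apply: cvgM (cvg_cst _); last apply: cvgM (cvg_cst _) _.
  exact: pow_cont.
exact: pow_cont.
Qed.

End power_primitive.

Section convex_primitive.
Context {R : realType}.
Variables s A B : R.
Hypothesis s_gt0 : 0 < s.

Definition convprim (p t : R) := A * powprim s p t + B * powprim s (1 - p) (1 - t).

Lemma is_derive_convprim (p t : R) : 0 < t < 1 ->
  is_derive t 1 (convprim p) ((t - p) * (A * t `^ s + B * (1 - t) `^ s)).
Proof.
case/andP => t0 t1.
have d1 : is_derive t 1 (powprim s p) ((t - p) * t `^ s) by exact: is_derive_powprim.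
have d2 : is_derive t 1 (powprim s (1 - p) \o (fun y => 1 - y))
    (((1 - t) - (1 - p)) * (1 - t) `^ s * -1).
  apply: is_derive1_comp; first by apply: is_derive_powprim; rewrite ?subr_gt0.
  rewrite -[X in is_derive _ _ X _]/(cst 1 - id).
  by apply: is_derive_eq; rewrite sub0r.
have := is_deriveD (is_deriveZ A d1) (is_deriveZ B d2).
by move/is_derive_eq; apply; rewrite /GRing.scale/=; ring.
Qed.

Lemma continuous_convprim (p : R) : continuous (convprim p).
Proof.
move=> t; apply: cvgD; apply: cvgM (cvg_cst _) _; first exact: continuous_powprim.
apply: (@cvg_comp _ _ _ (fun y => 1 - y) (powprim s (1 - p))).
  exact: cvgB (cvg_cst _) cvg_id.
exact: continuous_powprim.
Qed.

Lemma convprimE (p t : R) : 0 <= t <= 1 ->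
  convprim p t = A * (t * t `^ (s + 1) / (s + 2) - p * t `^ (s + 1) / (s + 1))
    + B * ((1 - t) * (1 - t) `^ (s + 1) / (s + 2) - (1 - p) * (1 - t) `^ (s + 1) / (s + 1)).
Proof.
by case/andP => t0 t1; rewrite /convprim !powprimE ?subr_ge0// !powR_add2 ?subr_ge0.
Qed.

Section weights.
Variables alpha lam : R.
Hypotheses (alpha_ge0 : 0 <= alpha) (alpha_le1 : alpha <= 1).
Hypotheses (lam_ge0 : 0 <= lam) (lam_le1 : lam <= 1).
Local Notation p := (1 - alpha * lam).
Local Notation q := ((1 - alpha) * lam).

Let alpha01 : 0 <= alpha <= 1. Proof. exact/andP. Qed.
Let p01 : 0 <= p <= 1.
Proof. by rewrite subr_ge0 lerBlDr lerDl mulr_ge0 ?mulr_ile1. Qed.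
Let q01 : 0 <= q <= 1.
Proof. by rewrite mulr_ge0 ?mulr_ile1 ?subr_ge0 ?lerBlDr ?lerDl. Qed.
Let alpha_lam_ge0 : 0 <= alpha * lam. Proof. exact: mulr_ge0. Qed.
Let alphaN_ge0 : 0 <= 1 - alpha. Proof. by rewrite subr_ge0. Qed.
Let p_ge0 : 0 <= p. Proof. by case/andP: p01. Qed.
Let q_ge0 : 0 <= q. Proof. by case/andP: q01. Qed.
Let qN_ge0 : 0 <= 1 - q. Proof. by rewrite subr_ge0; case/andP: q01. Qed.

Lemma convprim_identity_i :
  (convprim p 1 - convprim p p) + (convprim p alpha - convprim p p)
  + ((convprim q alpha - convprim q q) + (convprim q 0 - convprim q q))
  = (c1 alpha lam s + c2 (1 - alpha) lam s) * B
    + (c2 alpha lam s + c1 (1 - alpha) lam s) * A.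
Proof.
rewrite !convprimE ?lexx ?ler01 // subrr subr0 powR1 powR0 ?gt_eqF ?addr_gt0 //.
rewrite /c1 /c2 !subKr !powR_add2 //.
by field; rewrite !gt_eqF ?addr_gt0.
Qed.

Lemma convprim_identity_ii :
  (convprim p 1 - convprim p p) + (convprim p alpha - convprim p p)
  + (convprim q 0 - convprim q alpha)
  = (c1 alpha lam s + c4 (1 - alpha) lam s) * B
    + (c2 alpha lam s + c3 (1 - alpha) lam s) * A.
Proof.
rewrite !convprimE ?lexx ?ler01 // subrr subr0 powR1 powR0 ?gt_eqF ?addr_gt0 //.
rewrite /c1 /c2 /c3 /c4 !subKr !powR_add2 //.
by field; rewrite !gt_eqF ?addr_gt0.
Qed.

Lemma convprim_identity_iii :
  (convprim p 1 - convprim p alpha)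
  + ((convprim q alpha - convprim q q) + (convprim q 0 - convprim q q))
  = (c3 alpha lam s + c2 (1 - alpha) lam s) * B
    + (c4 alpha lam s + c1 (1 - alpha) lam s) * A.
Proof.
rewrite !convprimE ?lexx ?ler01 // subrr subr0 powR1 powR0 ?gt_eqF ?addr_gt0 //.
rewrite /c1 /c2 /c3 /c4 !subKr !powR_add2 //.
by field; rewrite !gt_eqF ?addr_gt0.
Qed.

End weights.

End convex_primitive.

Section kernel_primitive.
Context {R : realType}.
Context {I : set R}.
Variables (f : R -> R) (a b : R).
Hypotheses (I_itv : is_interval I) (f_derivable : forall x, interior I x -> derivable f x 1).
Hypotheses (Ia : interior I a) (Ib : interior I b) (ab : a < b).

Lemma interior_itvcc z : a <= z <= b -> interior I z.
Proof.
case/andP; rewrite le_eqVlt => /predU1P[<- //|az].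
rewrite le_eqVlt => /predU1P[-> //|zb].
apply: (@filterS _ _ _ `]a, b[%classic).
  move=> y /=; rewrite in_itv/= => /andP[ay yb].
  by apply: (I_itv _ _ (interior_subset Ia) (interior_subset Ib)); rewrite !ltW.
by apply: open_nbhs_nbhs; split; [exact: interval_open|rewrite /= in_itv/= az zb].
Qed.

Lemma is_derive_f z : a <= z <= b -> is_derive z 1 f (derive1 f z).
Proof. by move=> hz; rewrite derive1E; apply/derivableP/f_derivable/interior_itvcc. Qed.

Lemma continuous_f z : a <= z <= b -> {for z, continuous f}.
Proof.
move/interior_itvcc/f_derivable/derivable1_diffP; exact: differentiable_continuous.
Qed.

Lemma integrable_f : lebesgue_measure.-integrable `[a, b] (EFin \o f).
Proof.
apply: continuous_compact_integrable; first exact: segment_compact.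
apply: continuous_in_subspaceT => z; rewrite inE /= in_itv/=.
exact: continuous_f.
Qed.

Let F z := \int[lebesgue_measure]_(t in `[a, z]) f t.

Lemma is_derive_integral z : a < z < b -> is_derive z 1 F (f z).
Proof.
case/andP => az zb; have hz : a <= z <= b by rewrite (ltW az) (ltW zb).
have [dF <-] := continuous_FTC1_closed zb integrable_f az (continuous_f _ hz).
by rewrite derive1E; apply: derivableP.
Qed.

Definition kprim w z := (z - w) * f z - F z.

Lemma is_derive_kprim w z : a < z < b ->
  is_derive z 1 (kprim w) ((z - w) * derive1 f z).
Proof.
move=> hz; have hz' : a <= z <= b by case/andP: hz => *; rewrite !ltW.
have df := is_derive_f _ hz'; have dF := is_derive_integral _ hz.
rewrite -[kprim w]/((id - cst w) * f - F).
by apply: is_derive_eq; rewrite /GRing.scale/= !fctE; ring.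
Qed.

Lemma continuous_kprim w u v : a <= u -> v <= b ->
  {within `[u, v], continuous (kprim w)}.
Proof.
move=> au vb; apply: within_continuousB.
  apply: continuous_in_subspaceT => z; rewrite inE /= in_itv/= => /andP[uz zv].
  apply: cvgM; first exact: cvgB cvg_id (cvg_cst _).
  by apply: continuous_f; rewrite (le_trans au uz) (le_trans zv vb).
apply: continuous_subspaceW (parameterized_integral_continuous (ltW ab) integrable_f).
by apply: subset_itv; rewrite bnd_simp.
Qed.

Local Notation pt t := (a + t * (b - a)).

Lemma I_f_kprim alpha lam :
  (b - a) * I_f f lam alpha a b =
    (kprim (pt (alpha * lam)) (pt (1 - alpha)) - kprim (pt (alpha * lam)) a)
    + (kprim (pt (1 - lam * (1 - alpha))) b
       - kprim (pt (1 - lam * (1 - alpha))) (pt (1 - alpha))).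
Proof.
have F_a : F a = 0 by rewrite /F set_itv1 Rintegral_set1.
rewrite /I_f /kprim F_a (_ : alpha * a + (1 - alpha) * b = pt (1 - alpha)); last by ring.
by rewrite -/(F b); field; rewrite gt_eqF// subr_gt0.
Qed.

Variable s : R.
Hypotheses (s_gt0 : 0 < s) (f'_sconvex : s_convex s a b (fun x => `|derive1 f x|)).
Local Notation A := `|derive1 f a|.
Local Notation B := `|derive1 f b|.

(* The barycentric coordinate: [z = coord z * a + (1 - coord z) * b]. *)
Definition coord z := (b - z) / (b - a).

Lemma coord_pt t : coord (pt t) = 1 - t.
Proof. by rewrite /coord; field; rewrite gt_eqF// subr_gt0. Qed.

Lemma is_derive_coord (z : R) : is_derive z 1 coord (- (b - a)^-1).
Proof.
rewrite -[coord]/((cst b - id) * cst (b - a)^-1).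
by apply: is_derive_eq; rewrite /GRing.scale/= !fctE; ring.
Qed.

Lemma coord_a : coord a = 1.
Proof. by rewrite /coord divff// gt_eqF// subr_gt0. Qed.

Lemma coord_b : coord b = 0.
Proof. by rewrite /coord subrr mul0r. Qed.

Lemma derive_le_sconvex z : a < z < b ->
  `|derive1 f z| <= A * coord z `^ s + B * (1 - coord z) `^ s.
Proof.
case/andP => az zb; have ba_gt0 : 0 < b - a by rewrite subr_gt0.
have t01 : 0 <= coord z <= 1.
  by rewrite divr_ge0 ?ler_pdivrMr ?mul1r ?subr_ge0 ?lerD2l ?lerN2 ?ltW.
have aab : a <= a <= b by rewrite lexx ltW.
have abb : a <= b <= b by rewrite lexx ltW.
have := f'_sconvex.2 a b (coord z) aab abb t01.
have -> : coord z * a + (1 - coord z) * b = z by rewrite /coord; field; rewrite gt_eqF.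
by rewrite [_ * A]mulrC [_ * B]mulrC.
Qed.

Definition majorant w z := (b - a) ^+ 2 * convprim s A B (coord w) (coord z).

Lemma is_derive_majorant w z : a < z < b ->
  is_derive z 1 (majorant w) ((z - w) * (A * coord z `^ s + B * (1 - coord z) `^ s)).
Proof.
move=> /andP[az zb]; have ba_gt0 : 0 < b - a by rewrite subr_gt0.
have t01 : 0 < coord z < 1.
  by rewrite divr_gt0 ?ltr_pdivrMr ?mul1r ?subr_gt0 ?ltrD2l ?ltrN2.
have := is_deriveZ ((b - a) ^+ 2) (is_derive1_comp
  (is_derive_convprim s A B s_gt0 (coord w) _ t01) (is_derive_coord z)).
move/is_derive_eq; apply; rewrite /GRing.scale/= /coord.
by field; rewrite gt_eqF.
Qed.

Lemma continuous_majorant w : continuous (majorant w).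
Proof.
move=> z; apply: cvgM (cvg_cst _) _.
have coord_z : {for z, continuous coord}.
  exact: cvgM (cvgB (cvg_cst _) cvg_id) (cvg_cst _).
exact: continuous_comp coord_z (continuous_convprim _ _ _ s_gt0 _ _).
Qed.

Lemma inner_itv {x y z : R} : a <= x -> y <= b -> x < z < y -> a < z < b.
Proof. by move=> ax yb /andP[xz zy]; rewrite (le_lt_trans ax xz) (lt_le_trans zy yb). Qed.

Lemma kprim_le_right w x y : a <= x -> x <= y -> y <= b -> w <= x ->
  `|kprim w y - kprim w x| <= majorant w y - majorant w x.
Proof.
move=> ax xy yb wx.
apply: (ler_normB_derive (dF := fun z => (z - w) * derive1 f z)
  (dP := fun z => (z - w) * (A * coord z `^ s + B * (1 - coord z) `^ s)) xy).
- by move=> z /(inner_itv ax yb); exact: is_derive_kprim.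
- by move=> z /(inner_itv ax yb); exact: is_derive_majorant.
- move=> z xzy; have wz : 0 <= z - w.
    by case/andP: xzy => xz _; rewrite subr_ge0 (le_trans wx (ltW xz)).
  by rewrite normrM (ger0_norm wz) ler_wpM2l// derive_le_sconvex// (inner_itv ax yb).
- exact: continuous_kprim.
- exact/continuous_subspaceT/continuous_majorant.
Qed.

Lemma kprim_le_left w x y : a <= x -> x <= y -> y <= b -> y <= w ->
  `|kprim w y - kprim w x| <= majorant w x - majorant w y.
Proof.
move=> ax xy yb yw.
have -> : majorant w x - majorant w y = (- majorant w) y - (- majorant w) x.
  by rewrite !fctE opprK addrC.
apply: (ler_normB_derive (dF := fun z => (z - w) * derive1 f z)
  (dP := fun z => - ((z - w) * (A * coord z `^ s + B * (1 - coord z) `^ s))) xy).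
- by move=> z /(inner_itv ax yb); exact: is_derive_kprim.
- by move=> z /(inner_itv ax yb) /(is_derive_majorant w); exact: is_deriveN.
- move=> z xzy; have zw : z - w <= 0.
    by case/andP: xzy => _ zy; rewrite subr_le0 (le_trans (ltW zy) yw).
  rewrite normrM (ler0_norm zw) -mulNr ler_wpM2l ?oppr_ge0//.
  by rewrite derive_le_sconvex// (inner_itv ax yb).
- exact: continuous_kprim.
- by apply: continuous_subspaceT => z; apply: cvgN; exact: continuous_majorant.
Qed.

Lemma kprim_le_mid w x y : a <= x -> x <= w -> w <= y -> y <= b ->
  `|kprim w y - kprim w x|
    <= (majorant w x - majorant w w) + (majorant w y - majorant w w).
Proof.
move=> ax xw wy yb; have aw : a <= w := le_trans ax xw.
rewrite (_ : kprim w y - kprim w x = (kprim w w - kprim w x) + (kprim w y - kprim w w)).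
  apply: le_trans (ler_normD _ _) _; apply: lerD.
    by apply: kprim_le_left; rewrite // (le_trans wy yb).
  by apply: kprim_le_right.
by ring.
Qed.

Lemma ler_pt {t1 t2 : R} : t1 <= t2 -> pt t1 <= pt t2.
Proof. by move=> t12; rewrite lerD2l ler_wpM2r// subr_ge0 ltW. Qed.

Lemma ler_a_pt t : 0 <= t -> a <= pt t.
Proof. by move=> t0; rewrite -[X in X <= _]addr0 -(mul0r (b - a)) ler_pt. Qed.

Lemma ler_pt_b t : t <= 1 -> pt t <= b.
Proof. by move=> t1; rewrite (le_trans (ler_pt t1))// mul1r addrC subrK. Qed.

Section weights.
Variables alpha lam : R.
Hypotheses (alpha_ge0 : 0 <= alpha) (alpha_le1 : alpha <= 1).
Hypotheses (lam_ge0 : 0 <= lam) (lam_le1 : lam <= 1).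
Local Notation u1 := (pt (alpha * lam)).
Local Notation c := (pt (1 - alpha)).
Local Notation u2 := (pt (1 - lam * (1 - alpha))).
Local Notation p := (1 - alpha * lam).
Local Notation q := ((1 - alpha) * lam).
Local Notation N := (convprim s A B).

Let coord_u1 : coord u1 = p. Proof. exact: coord_pt. Qed.
Let coord_c : coord c = alpha. Proof. by rewrite coord_pt subKr. Qed.
Let coord_u2 : coord u2 = q. Proof. by rewrite coord_pt subKr mulrC. Qed.

Let u1_ge0 : 0 <= alpha * lam. Proof. exact: mulr_ge0. Qed.
Let c_ge0 : 0 <= 1 - alpha. Proof. by rewrite subr_ge0. Qed.
Let c_le1 : 1 - alpha <= 1. Proof. by rewrite gerBl. Qed.
Let u2_le1 : 1 - lam * (1 - alpha) <= 1. Proof. by rewrite gerBl mulr_ge0. Qed.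

Lemma norm_I_f_le X :
  `|kprim u1 c - kprim u1 a| + `|kprim u2 b - kprim u2 c| <= (b - a) ^+ 2 * X ->
  `|I_f f lam alpha a b| <= (b - a) * X.
Proof.
move=> le_X; have ba_gt0 : 0 < b - a by rewrite subr_gt0.
rewrite -(ler_pM2l ba_gt0) -[X in X * _](gtr0_norm ba_gt0) -normrM I_f_kprim.
by apply: le_trans (ler_normD _ _) _; rewrite mulrA -expr2.
Qed.

Let kprim_u1_mid : alpha * lam <= 1 - alpha ->
  `|kprim u1 c - kprim u1 a| <= (b - a) ^+ 2 * ((N p 1 - N p p) + (N p alpha - N p p)).
Proof.
move=> u1c.
have := kprim_le_mid u1 a c (lexx a) (ler_a_pt _ u1_ge0) (ler_pt u1c) (ler_pt_b _ c_le1).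
by rewrite /majorant coord_a coord_u1 coord_c -!mulrBr -mulrDr.
Qed.

Let kprim_u2_mid : 1 - alpha <= 1 - lam * (1 - alpha) ->
  `|kprim u2 b - kprim u2 c| <= (b - a) ^+ 2 * ((N q alpha - N q q) + (N q 0 - N q q)).
Proof.
move=> cu2.
have := kprim_le_mid u2 c b (ler_a_pt _ c_ge0) (ler_pt cu2) (ler_pt_b _ u2_le1) (lexx b).
by rewrite /majorant coord_b coord_u2 coord_c -!mulrBr -mulrDr.
Qed.

Lemma I_f_bound_i : alpha * lam <= 1 - alpha <= 1 - lam * (1 - alpha) ->
  `|I_f f lam alpha a b| <= (b - a) *
    ((c1 alpha lam s + c2 (1 - alpha) lam s) * B
     + (c2 alpha lam s + c1 (1 - alpha) lam s) * A).
Proof.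
case/andP => u1c cu2; apply: norm_I_f_le.
by rewrite -convprim_identity_i // [_ ^+ 2 * _]mulrDr lerD ?kprim_u1_mid ?kprim_u2_mid.
Qed.

Lemma I_f_bound_ii : alpha * lam <= 1 - lam * (1 - alpha) <= 1 - alpha ->
  `|I_f f lam alpha a b| <= (b - a) *
    ((c1 alpha lam s + c4 (1 - alpha) lam s) * B
     + (c2 alpha lam s + c3 (1 - alpha) lam s) * A).
Proof.
case/andP => u1u2 u2c; apply: norm_I_f_le.
rewrite -convprim_identity_ii // [_ ^+ 2 * _]mulrDr lerD ?kprim_u1_mid ?(le_trans u1u2)//.
have := kprim_le_right u2 c b (ler_a_pt _ c_ge0) (ler_pt_b _ c_le1) (lexx b) (ler_pt u2c).
by rewrite /majorant coord_b coord_u2 coord_c -mulrBr.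
Qed.

Lemma I_f_bound_iii : 1 - alpha <= alpha * lam <= 1 - lam * (1 - alpha) ->
  `|I_f f lam alpha a b| <= (b - a) *
    ((c3 alpha lam s + c2 (1 - alpha) lam s) * B
     + (c4 alpha lam s + c1 (1 - alpha) lam s) * A).
Proof.
case/andP => cu1 u1u2; apply: norm_I_f_le.
rewrite -convprim_identity_iii // [_ ^+ 2 * _]mulrDr lerD ?kprim_u2_mid ?(le_trans cu1)//.
have := kprim_le_left u1 a c (lexx a) (ler_a_pt _ c_ge0) (ler_pt_b _ c_le1) (ler_pt cu1).
by rewrite /majorant coord_a coord_u1 coord_c -mulrBr.
Qed.

End weights.

End kernel_primitive.

Theorem mainTheorem2 (R : realType) (I : set R) (f : R -> R) (a b alpha lam s : R) :
  is_interval I ->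
  (forall x, interior I x -> derivable f x 1) ->
  interior I a -> interior I b -> a < b ->
  lebesgue_measure.-integrable `[a, b] (EFin \o derive1 f) ->
  0 <= alpha <= 1 -> 0 <= lam <= 1 ->
  0 < s <= 1 ->
  s_convex s a b (fun x => `|derive1 f x|) ->
  [/\ (alpha * lam <= 1 - alpha <= 1 - lam * (1 - alpha) ->
        `|I_f f lam alpha a b| <= (b - a) *
          ((c1 alpha lam s + c2 (1 - alpha) lam s) * `|derive1 f b|
           + (c2 alpha lam s + c1 (1 - alpha) lam s) * `|derive1 f a|)),
      (alpha * lam <= 1 - lam * (1 - alpha) <= 1 - alpha ->
        `|I_f f lam alpha a b| <= (b - a) *
          ((c1 alpha lam s + c4 (1 - alpha) lam s) * `|derive1 f b|
           + (c2 alpha lam s + c3 (1 - alpha) lam s) * `|derive1 f a|))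
    & (1 - alpha <= alpha * lam <= 1 - lam * (1 - alpha) ->
        `|I_f f lam alpha a b| <= (b - a) *
          ((c3 alpha lam s + c2 (1 - alpha) lam s) * `|derive1 f b|
           + (c4 alpha lam s + c1 (1 - alpha) lam s) * `|derive1 f a|))].
Proof.
move=> I_itv f_derivable Ia Ib ab _ /andP[alpha_ge0 alpha_le1] /andP[lam_ge0 lam_le1].
case/andP => s_gt0 _ f'_sconvex.
by split; [exact: (I_f_bound_i (I := I)) | exact: (I_f_bound_ii (I := I))
  | exact: (I_f_bound_iii (I := I))].
Qed.
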